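(* Let $I,J\subset\mathbb{R}$ be intervals, $f:I\times J\to I$, $f_\lambda(x)=f(x,\lambda)$, $\lambda_0\in J$, $f_0=f_{\lambda_0}$. Assume: (H1) $f$ is a $C^1$ family of $C^2$ interval maps; (H2) $f_0$ is not constant on any interval; (H3) $f_0$ has at most one of: (a) a non-hyperbolic fixed point or periodic orbit, which as $\lambda$ varies is a generic codimension-one period-doubling or saddle-node bifurcation; (b) one critical point which constitutes a tangency between stable and unstable manifolds of fixed points or periodic orbits, generic in that as $\lambda$ varies through $\lambda_0$ the critical point moves from one side of the periodic point to the other; (H4) for each $\lambda$, $x_\lambda$ is a repelling fixed point of $f_\lambda$, $x_0:=x_{\lambda_0}$, and $y$ is a homoclinic point to $x_0$ for $f_0$; (H5) the homoclinic orbit containing $y$ at $\lambda_0$ contains only one critical point of $f_0$; (H6) $w$ is a homoclinic tangency point to $x_0$ for $f_0$ contained in at least one homoclinic orbit $(z_{-k})_{k\ge0}$, with $w=z_{-L}$. If $w\in U_{right}\cap U_{left}$, then $(w,\lambda_0)$ is not a chain explosion point.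
   Context: An $\epsilon$-chain for $g$ from $x$ to $y$: $z_0=x,\dots,z_N=y$ with $|g(z_{n-1})-z_n|<\epsilon$; $x$ is chain recurrent if for every $\epsilon>0$ there is such a chain from $x$ to itself with $N>0$. $(x,\lambda_0)$ is a chain explosion point if $x$ is chain recurrent for $f_{\lambda_0}$ but some neighborhood of $x$ contains no chain recurrent point of $f_\lambda$ for all $\lambda$ on one side of $\lambda_0$. For a repelling fixed point $x_0$, $y$ is homoclinic to $x_0$ if $y$ lies in the unstable manifold of $x_0$ and $f_0^K(y)=x_0$ for some $K>0$. A homoclinic orbit is a sequence $(z_{-k})_{k\ge0}$ with $z_0=x_0$, $z_{-K}=y$ for some $K$, $f_0(z_{-k})=z_{-k+1}$, $z_{-k}\to x_0$; $w=z_{-L}$ is a homoclinic tangency point if the graph of $f_0$ has a horizontal tangent at $w$. The sets $U_{left},U_{right}$ are defined when $f_0'(x_0)>0$: the local left and right branches of the unstable manifold of $x_0$ (small one-sided neighborhoods of $x_0$) are disjoint, and $U_{left}$, $U_{right}$ are the unions of all forward images under $f_0$ of the local left and right branches, respectively. *)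

From Stdlib Require Import Reals Lra.
Open Scope R_scope.

Definition is_interval (I : R -> Prop) : Prop :=
  forall a b x, I a -> I b -> a <= x <= b -> I x.

Definition nondegenerate (I : R -> Prop) : Prop :=
  exists a b, a < b /\ I a /\ I b.

Definition derive_within (D : R -> Prop) (g : R -> R) (x l : R) : Prop :=
  forall eps, 0 < eps -> exists delta, 0 < delta /\
    forall y, D y -> y <> x -> Rabs (y - x) < delta ->
      Rabs ((g y - g x) / (y - x) - l) < eps.

Definition continuous_within (D : R -> Prop) (g : R -> R) (x : R) : Prop :=
  forall eps, 0 < eps -> exists delta, 0 < delta /\
    forall y, D y -> Rabs (y - x) < delta -> Rabs (g y - g x) < eps.

Definition continuous2_within (I J : R -> Prop) (h : R -> R -> R) (x l : R) : Prop :=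
  forall eps, 0 < eps -> exists delta, 0 < delta /\
    forall y m, I y -> J m -> Rabs (y - x) < delta -> Rabs (m - l) < delta ->
      Rabs (h y m - h x l) < eps.

Definition second_derive_within (D : R -> Prop) (g : R -> R) (x l : R) : Prop :=
  exists g1, (forall y, D y -> derive_within D g y (g1 y)) /\ derive_within D g1 x l.

Definition third_derive_within (D : R -> Prop) (g : R -> R) (x l : R) : Prop :=
  exists g1 g2, (forall y, D y -> derive_within D g y (g1 y)) /\
    (forall y, D y -> derive_within D g1 y (g2 y)) /\ derive_within D g2 x l.

(* (H1): f is a C^1 family (jointly C^1 in (x,lambda)) of C^2 interval maps.
   fx = d f / dx, fxx = d^2 f / dx^2, fl = d f / d lambda. *)
Definition C1_family_of_C2_maps (I J : R -> Prop) (f fx fxx fl : R -> R -> R) : Prop :=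
  (forall x l, I x -> J l -> derive_within I (fun u => f u l) x (fx x l)) /\
  (forall x l, I x -> J l -> derive_within J (fun m => f x m) l (fl x l)) /\
  (forall x l, I x -> J l -> continuous2_within I J fx x l) /\
  (forall x l, I x -> J l -> continuous2_within I J fl x l) /\
  (forall x l, I x -> J l -> derive_within I (fun u => fx u l) x (fxx x l)) /\
  (forall x l, I x -> J l -> continuous_within I (fun u => fxx u l) x).

Definition not_constant_on_any_interval (I : R -> Prop) (g : R -> R) : Prop :=
  forall a b, a < b -> (forall x, a <= x <= b -> I x) ->
    exists x1 x2, a <= x1 <= b /\ a <= x2 <= b /\ g x1 <> g x2.

Definition periodic_pt (I : R -> Prop) (g : R -> R) (n : nat) (p : R) : Prop :=
  I p /\ (0 < n)%nat /\ Nat.iter n g p = p /\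
  forall k, (0 < k < n)%nat -> Nat.iter k g p <> p.

(* multiplier (g^n)'(x) = prod_{k<n} g'(g^k x) *)
Fixpoint multiplier (g' g : R -> R) (n : nat) (x : R) : R :=
  match n with
  | O => 1
  | S k => g' (Nat.iter k g x) * multiplier g' g k x
  end.

Definition hyperbolic (g' g : R -> R) (n : nat) (p : R) : Prop :=
  Rabs (multiplier g' g n p) <> 1.

Definition repelling_fixed_pt (I : R -> Prop) (g g' : R -> R) (x : R) : Prop :=
  I x /\ g x = x /\ 1 < Rabs (g' x).

Definition unstable_mfd (I : R -> Prop) (g : R -> R) (q y : R) : Prop :=
  forall delta, 0 < delta -> exists (n : nat) u,
    I u /\ Rabs (u - q) < delta /\ Nat.iter n g u = y.

Section H3defs.
Variables (I J : R -> Prop) (f fx : R -> R -> R) (l0 : R).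

Let fl_ (l : R) := fun u => f u l.
Let fxl_ (l : R) := fun u => fx u l.

Definition generic_saddle_node (n : nat) (p : R) : Prop :=
  multiplier (fxl_ l0) (fl_ l0) n p = 1 /\
  (exists s, second_derive_within I (Nat.iter n (fl_ l0)) p s /\ s <> 0) /\
  (exists d, derive_within J (fun l => Nat.iter n (fl_ l) p) l0 d /\ d <> 0).

Definition generic_period_doubling (n : nat) (p : R) : Prop :=
  multiplier (fxl_ l0) (fl_ l0) n p = -1 /\
  (exists (q : R -> R) eps, 0 < eps /\ q l0 = p /\
     (forall l, J l -> Rabs (l - l0) < eps -> I (q l) /\ Nat.iter n (fl_ l) (q l) = q l) /\
     continuous_within J q l0 /\
     (exists d, derive_within J (fun l => multiplier (fxl_ l) (fl_ l) n (q l)) l0 d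
                /\ d <> 0)) /\
  (exists t, third_derive_within I (Nat.iter (2 * n) (fl_ l0)) p t /\ t <> 0).

(* critical point of f_0 constituting a tangency between the unstable manifold
   of a periodic point q1 and the stable manifold of a periodic point q2 *)
Definition tangency_crit (c : R) : Prop :=
  I c /\ fx c l0 = 0 /\
  (exists n1 q1, periodic_pt I (fl_ l0) n1 q1 /\ unstable_mfd I (fl_ l0) q1 c) /\
  (exists n2 q2 (m : nat), periodic_pt I (fl_ l0) n2 q2 /\ (1 <= m)%nat /\
     Nat.iter m (fl_ l0) c = q2).

(* genericity: as lambda passes through l0, the (continued) critical point,
   pushed forward m times, moves from one side of the (continued) periodic
   point to the other *)
Definition generic_tangency (c : R) : Prop :=
  I c /\ fx c l0 = 0 /\
  exists n1 q1 n2 q2 (m : nat),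
    periodic_pt I (fl_ l0) n1 q1 /\ unstable_mfd I (fl_ l0) q1 c /\
    periodic_pt I (fl_ l0) n2 q2 /\ (1 <= m)%nat /\ Nat.iter m (fl_ l0) c = q2 /\
    exists (cc qq : R -> R) eps, 0 < eps /\ cc l0 = c /\ qq l0 = q2 /\
      continuous_within J cc l0 /\ continuous_within J qq l0 /\
      (forall l, J l -> Rabs (l - l0) < eps ->
         I (cc l) /\ fx (cc l) l = 0 /\ I (qq l) /\ Nat.iter n2 (fl_ l) (qq l) = qq l) /\
      (((forall l, J l -> l0 - eps < l < l0 -> Nat.iter m (fl_ l) (cc l) < qq l) /\
        (forall l, J l -> l0 < l < l0 + eps -> qq l < Nat.iter m (fl_ l) (cc l))) \/
       ((forall l, J l -> l0 - eps < l < l0 -> qq l < Nat.iter m (fl_ l) (cc l)) /\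
        (forall l, J l -> l0 < l < l0 + eps -> Nat.iter m (fl_ l) (cc l) < qq l))).

Definition all_periodic_hyperbolic : Prop :=
  forall n p, periodic_pt I (fl_ l0) n p -> hyperbolic (fxl_ l0) (fl_ l0) n p.

(* (H3): at most one degeneracy, either (a) or (b), and it is generic *)
Definition H3_condition : Prop :=
  (all_periodic_hyperbolic /\ (forall c, ~ tangency_crit c))
  \/
  ((exists n p, periodic_pt I (fl_ l0) n p /\ ~ hyperbolic (fxl_ l0) (fl_ l0) n p /\
      (generic_saddle_node n p \/ generic_period_doubling n p) /\
      (forall n' p', periodic_pt I (fl_ l0) n' p' -> ~ hyperbolic (fxl_ l0) (fl_ l0) n' p' ->
         exists j : nat, p' = Nat.iter j (fl_ l0) p)) /\
   (forall c, ~ tangency_crit c))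
  \/
  (all_periodic_hyperbolic /\
   exists c, tangency_crit c /\ generic_tangency c /\
     (forall c', tangency_crit c' -> c' = c)).

End H3defs.

Definition homoclinic_pt (I : R -> Prop) (g : R -> R) (x0 y : R) : Prop :=
  unstable_mfd I g x0 y /\ exists K : nat, (0 < K)%nat /\ Nat.iter K g y = x0.

(* z k stands for z_{-k} *)
Definition homoclinic_orbit (I : R -> Prop) (g : R -> R) (x0 : R) (z : nat -> R) : Prop :=
  z O = x0 /\ (exists K : nat, (0 < K)%nat /\ homoclinic_pt I g x0 (z K)) /\
  (forall k, I (z k)) /\ (forall k, g (z (S k)) = z k) /\
  (forall eps, 0 < eps -> exists N : nat, forall k, (N <= k)%nat -> Rabs (z k - x0) < eps).

Definition homoclinic_tangency_pt (I : R -> Prop) (g g' : R -> R) (x0 w : R) : Prop :=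
  exists (z : nat -> R) (L : nat), homoclinic_orbit I g x0 z /\ z L = w /\ g' w = 0.

Definition U_left (I : R -> Prop) (g : R -> R) (x0 w : R) : Prop :=
  forall delta, 0 < delta -> exists (n : nat) u,
    I u /\ x0 - delta < u < x0 /\ Nat.iter n g u = w.

Definition U_right (I : R -> Prop) (g : R -> R) (x0 w : R) : Prop :=
  forall delta, 0 < delta -> exists (n : nat) u,
    I u /\ x0 < u < x0 + delta /\ Nat.iter n g u = w.

Definition eps_chain (I : R -> Prop) (g : R -> R) (eps x y : R) : Prop :=
  exists (N : nat) (z : nat -> R), (0 < N)%nat /\ z O = x /\ z N = y /\
    (forall n, (n <= N)%nat -> I (z n)) /\
    (forall n, (1 <= n <= N)%nat -> Rabs (g (z (n - 1)%nat) - z n) < eps).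

Definition chain_recurrent (I : R -> Prop) (g : R -> R) (x : R) : Prop :=
  I x /\ forall eps, 0 < eps -> eps_chain I g eps x x.

Definition chain_explosion_point (I J : R -> Prop) (f : R -> R -> R) (l0 x : R) : Prop :=
  chain_recurrent I (fun u => f u l0) x /\
  exists delta eps, 0 < delta /\ 0 < eps /\
    ((forall l, J l -> l0 < l < l0 + eps -> forall u, Rabs (u - x) < delta ->
        ~ chain_recurrent I (fun v => f v l) u) \/
     (forall l, J l -> l0 - eps < l < l0 -> forall u, Rabs (u - x) < delta ->
        ~ chain_recurrent I (fun v => f v l) u)).

From Stdlib Require Import Reals Lra Lia.
Open Scope R_scope.

(* Let [x0] be the repelling fixed point and [f_0^L w = x0]; [w <> x0] since
   [f_0'(w) = 0 < f_0'(x0)].  Pick [t1] close to [w], on the side of [x0], with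
   [f_0^L t1 <> x0] (possible by (H2)).  As [w] lies in both [U_left] and [U_right],
   some [u] strictly between [x0] and [f_0^L t1] satisfies [f_0^n u = w].  Choose [p]
   between [x0] and [u] so close to [x0] that [f_0^n p] stays closer to [x0] than [t1],
   and [t2] between [w] and [t1] so close to [w] that [f_0^L t2] is closer to [x0]
   than [p].  Then [f_0^L] carries [[t1, t2]] across [p] and [u], while [f_0^n] sends
   [p] and [u] to opposite sides of [[t1, t2]].  These finitely many strict
   inequalities persist for every [lambda] near [lambda_0], and the intermediate value
   theorem yields a periodic, hence chain recurrent, point of [f_lambda] in [[t1, t2]],
   on both sides of [lambda_0].  Only continuity of the family, (H2), (H4) at
   [lambda_0], (H6) and [w] in [U_left] and [U_right] are used. *)

Definition between (a b x : R) : Prop := Rmin a b <= x <= Rmax a b.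

Definition strictly_between (a b x : R) : Prop := Rmin a b < x < Rmax a b.

Ltac solve_between :=
  unfold strictly_between, between, Rmin, Rmax in *; repeat destruct Rle_dec;
  unfold Rabs in *; repeat destruct Rcase_abs; lra.

Lemma strictly_between_sym a b x : strictly_between a b x -> strictly_between b a x.
Proof. solve_between. Qed.

Lemma strictly_between_neq a b x : strictly_between a b x -> x <> a /\ x <> b.
Proof. solve_between. Qed.

Lemma strictly_between_between a b x : strictly_between a b x -> between a b x.
Proof. solve_between. Qed.

Lemma strictly_between_trans a b x y :
  strictly_between a b x -> strictly_between x b y -> strictly_between a b y.
Proof. solve_between. Qed.

Lemma strictly_between_dist a b x : strictly_between a b x -> Rabs (x - a) < Rabs (b - a).
Proof. solve_between. Qed.

Lemma strictly_between_move_endpoint a a' b x :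
  strictly_between a b x -> Rabs (a' - a) < Rabs (x - a) -> strictly_between a' b x.
Proof. solve_between. Qed.

Lemma strictly_between_of_between a b c t :
  strictly_between a b c -> between a c t -> t <> a -> strictly_between a b t.
Proof. solve_between. Qed.

Lemma between_dist a b x : between a b x -> Rabs (x - a) <= Rabs (b - a).
Proof. solve_between. Qed.

Lemma between_ball a b x c d :
  between a b x -> Rabs (a - c) < d -> Rabs (b - c) < d -> Rabs (x - c) < d.
Proof. solve_between. Qed.

Lemma strictly_between_near a b d :
  a <> b -> 0 < d -> exists p, strictly_between a b p /\ Rabs (p - a) < d.
Proof.
  intros Hab Hd. set (h := Rmin (d / 2) (Rabs (b - a) / 2)).
  assert (0 < Rabs (b - a)) by (apply Rabs_pos_lt; lra).
  assert (Hh : 0 < h) by (apply Rmin_glb_lt; lra).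
  assert (h <= d / 2 /\ h <= Rabs (b - a) / 2) as [Hhd Hhb]
    by (split; [apply Rmin_l | apply Rmin_r]).
  destruct (Rlt_or_le a b); [exists (a + h) | exists (a - h)]; split; solve_between.
Qed.

Lemma displacements_opposite P U t1 t2 a b :
  strictly_between P U t1 -> strictly_between P U t2 ->
  between t1 t2 a -> between t1 t2 b ->
  between (P - a) (U - b) 0.
Proof. solve_between. Qed.

Lemma derive_within_continuous D g x l :
  derive_within D g x l -> continuous_within D g x.
Proof.
  intros Hd eps He.
  destruct (Hd 1 Rlt_0_1) as [d0 [Hd0 Hq]].
  assert (Hl : 0 < Rabs l + 1) by (pose proof (Rabs_pos l); lra).
  exists (Rmin d0 (eps / (Rabs l + 1))).
  split; [apply Rmin_glb_lt; [lra | apply Rdiv_lt_0_compat; lra] |].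
  intros y Dy Hy. apply Rmin_Rgt in Hy as [Hy0 Hyeps].
  destruct (Req_dec y x) as [-> | Hne]; [rewrite Rminus_diag, Rabs_R0; lra |].
  specialize (Hq y Dy Hne Hy0).
  set (q := (g y - g x) / (y - x)) in *.
  assert (Eq : g y - g x = q * (y - x)) by (unfold q; field; lra).
  assert (Hqb : Rabs q < Rabs l + 1).
  { replace q with ((q - l) + l) by ring. pose proof (Rabs_triang (q - l) l). lra. }
  assert (Rabs (y - x) * (Rabs l + 1) < eps).
  { apply Rmult_lt_reg_r with (/ (Rabs l + 1)); [apply Rinv_0_lt_compat; lra |].
    rewrite Rmult_assoc, Rinv_r, Rmult_1_r by lra. exact Hyeps. }
  rewrite Eq, Rabs_mult. pose proof (Rabs_pos q). pose proof (Rabs_pos (y - x)). nra.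
Qed.

Lemma derive_within_interior D g x l :
  derive_within D g x l -> (exists r, 0 < r /\ forall z, Rabs (z - x) < r -> D z) ->
  derivable_pt_lim g x l.
Proof.
  intros Hd [r [Hr Hball]] eps He.
  destruct (Hd eps He) as [d [Hd0 Hq]].
  exists (mkposreal _ (Rmin_glb_lt _ _ _ Hd0 Hr)). intros h Hh Hlt. simpl in Hlt.
  apply Rmin_Rgt in Hlt as [Hhd Hhr].
  assert (E : x + h - x = h) by ring.
  specialize (Hq (x + h)). rewrite E in Hq. apply Hq; auto.
  - apply Hball. rewrite E. lra.
  - intro Hc. apply Hh. lra.
Qed.

Lemma mean_value_bound D (g g' : R -> R) c r B :
  (forall z, Rabs (z - c) < r -> D z /\ derive_within D g z (g' z) /\ Rabs (g' z) <= B) ->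
  forall m, Rabs (m - c) < r -> Rabs (g m - g c) <= B * Rabs (m - c).
Proof.
  intros Hg.
  assert (Hlip : forall a b, a < b -> Rabs (a - c) < r -> Rabs (b - c) < r ->
                   Rabs (g b - g a) <= B * (b - a)).
  { intros a b Hab Ha Hb.
    assert (Hin : forall z, a <= z <= b -> Rabs (z - c) < r) by (intros; solve_between).
    destruct (MVT_cor2 g g' a b Hab) as [z [Ez Hz]].
    - intros z Hz. apply derive_within_interior with D; [apply Hg; auto |].
      exists (r - Rabs (z - c)). split; [specialize (Hin z Hz); lra |].
      intros v Hv. apply Hg. pose proof (Rabs_triang (v - z) (z - c)).
      replace (v - z + (z - c)) with (v - c) in * by ring. lra.
    - rewrite Ez, Rabs_mult, (Rabs_pos_eq (b - a)) by lra.
      apply Rmult_le_compat_r; [lra | apply Hg, Hin; lra]. }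
  intros m Hm.
  assert (Hcc : Rabs (c - c) < r)
    by (rewrite Rminus_diag, Rabs_R0; pose proof (Rabs_pos (m - c)); lra).
  destruct (Rtotal_order c m) as [Hcm | [<- | Hmc]].
  - rewrite (Rabs_pos_eq (m - c)) by lra. apply Hlip; auto.
  - rewrite !Rminus_diag, Rabs_R0, Rmult_0_r. lra.
  - rewrite Rabs_minus_sym, (Rabs_minus_sym m c), (Rabs_pos_eq (c - m)) by lra.
    apply Hlip; auto.
Qed.

Lemma C1_family_continuous2 I J (f fx fxx fl : R -> R -> R) l e :
  C1_family_of_C2_maps I J f fx fxx fl -> 0 < e ->
  (forall m, Rabs (m - l) < e -> J m) ->
  forall x, I x -> continuous2_within I J f x l.
Proof.
  intros [Hfx [Hfl [_ [Cfl _]]]] He HJ x Ix eps Heps.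
  assert (Jl : J l) by (apply HJ; rewrite Rminus_diag, Rabs_R0; lra).
  destruct (Cfl x l Ix Jl 1 Rlt_0_1) as [d1 [Hd1 Hfl_near]].
  destruct (derive_within_continuous _ _ _ _ (Hfx x l Ix Jl) (eps / 2)) as [d2 [Hd2 Hf_near]];
    [lra |].
  set (B := Rabs (fl x l) + 1).
  assert (HB : 0 < B) by (unfold B; pose proof (Rabs_pos (fl x l)); lra).
  exists (Rmin (Rmin d1 e) (Rmin d2 (eps / (2 * B)))).
  split; [repeat apply Rmin_glb_lt; try apply Rdiv_lt_0_compat; lra |].
  intros y m Iy Jm Hy Hm.
  apply Rmin_Rgt in Hy as [Hy1 Hy2]. apply Rmin_Rgt in Hy1 as [Hy1 _].
  apply Rmin_Rgt in Hy2 as [Hy2 _].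
  apply Rmin_Rgt in Hm as [Hm1 Hm2]. apply Rmin_Rgt in Hm2 as [_ Hm2].
  assert (Hvar : Rabs (f y m - f y l) <= B * Rabs (m - l)).
  { apply (mean_value_bound J (fun k => f y k) (fl y) l (Rmin d1 e)); auto.
    intros k Hk. apply Rmin_Rgt in Hk as [Hk1 Hk2].
    assert (Jk : J k) by auto.
    split; [exact Jk | split; [apply Hfl; auto |]].
    specialize (Hfl_near y k Iy Jk Hy1 Hk1).
    pose proof (Rabs_triang (fl y k - fl x l) (fl x l)).
    replace (fl y k - fl x l + fl x l) with (fl y k) in * by ring. unfold B. lra. }
  assert (B * Rabs (m - l) < eps / 2).
  { replace (eps / 2) with (B * (eps / (2 * B))) by (field; lra).
    apply Rmult_lt_compat_l; lra. }
  specialize (Hf_near y Iy Hy2).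
  pose proof (Rabs_triang (f y m - f y l) (f y l - f x l)).
  replace (f y m - f y l + (f y l - f x l)) with (f y m - f x l) in * by ring. lra.
Qed.

Lemma C1_family_continuous I J (f fx fxx fl : R -> R -> R) :
  C1_family_of_C2_maps I J f fx fxx fl ->
  forall l, J l -> forall x, I x -> continuous_within I (fun v => f v l) x.
Proof.
  intros [Hfx _] l Jl x Ix. apply derive_within_continuous with (fx x l). auto.
Qed.

Lemma continuous_within_minus D (g h : R -> R) x :
  continuous_within D g x -> continuous_within D h x ->
  continuous_within D (fun t => g t - h t) x.
Proof.
  intros Hg Hh eps He.
  destruct (Hg (eps / 2)) as [d1 [Hd1 H1]]; [lra |].
  destruct (Hh (eps / 2)) as [d2 [Hd2 H2]]; [lra |].
  exists (Rmin d1 d2). split; [apply Rmin_glb_lt; lra |].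
  intros y Dy Hy. apply Rmin_Rgt in Hy as [Hy1 Hy2].
  specialize (H1 y Dy Hy1). specialize (H2 y Dy Hy2).
  pose proof (Rabs_triang (g y - g x) (- (h y - h x))). rewrite Rabs_Ropp in *.
  replace (g y - g x + - (h y - h x)) with (g y - h y - (g x - h x)) in * by ring. lra.
Qed.

Lemma continuous_within_id D x : continuous_within D (fun t => t) x.
Proof. intros eps He. exists eps. auto. Qed.

Section Interval.

Variable I : R -> Prop.
Hypothesis HI : is_interval I.

Lemma between_in a b x : I a -> I b -> between a b x -> I x.
Proof.
  intros Ia Ib H. destruct (Rle_dec a b).
  - apply (HI a b); auto. solve_between.
  - apply (HI b a); auto. solve_between.
Qed.

Lemma strictly_between_in a b x : I a -> I b -> strictly_between a b x -> I x.
Proof. intros Ia Ib H. apply (between_in a b); auto using strictly_between_between. Qed.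

Definition clamp lo hi x := Rmax lo (Rmin hi x).

(* Extending [g] by constants outside [[a, b]] reduces to the global IVT. *)
Lemma continuous_within_IVT (g : R -> R) :
  (forall t, I t -> continuous_within I g t) ->
  forall a b c, I a -> I b -> between (g a) (g b) c ->
  exists s, between a b s /\ g s = c.
Proof.
  intros Hg a b c Ia Ib Hc.
  set (lo := Rmin a b). set (hi := Rmax a b).
  assert (Hclamp : forall x, between a b (clamp lo hi x)).
  { intro x. unfold clamp, lo, hi. solve_between. }
  assert (Hclamp_id : forall x, between a b x -> clamp lo hi x = x).
  { intros x Hx. unfold clamp, lo, hi. solve_between. }
  assert (Hclamp_lip : forall x y, Rabs (clamp lo hi x - clamp lo hi y) <= Rabs (x - y)).
  { intros x y. unfold clamp. solve_between. }
  set (h := fun x => g (clamp lo hi x) - c).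
  assert (Hh : continuity h).
  { intros x eps He.
    destruct (Hg _ (between_in a b _ Ia Ib (Hclamp x)) eps He) as [d [Hd Hd']].
    exists d. split; auto. intros y [_ Hy]. simpl in *. unfold R_dist, h in *.
    replace (g (clamp lo hi y) - c - (g (clamp lo hi x) - c))
      with (g (clamp lo hi y) - g (clamp lo hi x)) by ring.
    apply Hd'; [apply (between_in a b); auto | eapply Rle_lt_trans; eauto]. }
  assert (Hab : between a b lo /\ between a b hi) by (unfold lo, hi; split; solve_between).
  assert (Hsign : h lo * h hi <= 0).
  { assert (Hprod : (g a - c) * (g b - c) <= 0)
      by (clear - Hc; unfold between, Rmin, Rmax in Hc; destruct Rle_dec; nra).
    unfold h. rewrite !Hclamp_id by tauto.
    unfold lo, hi, Rmin, Rmax. destruct (Rle_dec a b); [| rewrite Rmult_comm]; exact Hprod. }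
  destruct (IVT_cor h lo hi Hh ltac:(unfold lo, hi; solve_between) Hsign) as [s [Hs Hs0]].
  assert (Hsab : between a b s) by (unfold lo, hi in *; solve_between).
  exists s. split; auto. unfold h in Hs0. rewrite Hclamp_id in Hs0 by auto. lra.
Qed.

Lemma not_constant_witness (g : R -> R) a b :
  not_constant_on_any_interval I g -> I a -> I b -> a <> b ->
  exists t, between a b t /\ g t <> g a.
Proof.
  intros Hg Ia Ib Hab.
  destruct (Hg (Rmin a b) (Rmax a b)) as [x1 [x2 [H1 [H2 Hne]]]].
  - solve_between.
  - intros x Hx. apply (between_in a b); auto.
  - destruct (Req_dec (g x1) (g a)) as [E | E]; [exists x2 | exists x1];
      split; auto; congruence.
Qed.

Lemma not_constant_near_point (g : R -> R) w x0 delta :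
  not_constant_on_any_interval I g -> I w -> I x0 -> w <> x0 -> 0 < delta ->
  exists t, strictly_between w x0 t /\ I t /\ Rabs (t - w) < delta /\ g t <> g w.
Proof.
  intros Hg Iw Ix0 Hwx0 Hdelta.
  destruct (strictly_between_near w x0 delta Hwx0 Hdelta) as [w' [Hw' Hw'd]].
  assert (Iw' : I w') by (apply (strictly_between_in w x0); auto).
  destruct (not_constant_witness g w w' Hg Iw Iw'
              (not_eq_sym (proj1 (strictly_between_neq _ _ _ Hw')))) as [t [Ht Hgt]].
  assert (Htw : t <> w) by (intros ->; auto).
  assert (St : strictly_between w x0 t) by (apply (strictly_between_of_between _ _ w'); auto).
  exists t. split; [exact St |]. split; [apply (strictly_between_in w x0); auto |].
  split; [pose proof (between_dist _ _ _ Ht); lra | exact Hgt].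
Qed.

Lemma continuous_within_near_point (g : R -> R) a b eps :
  continuous_within I g a -> I a -> I b -> a <> b -> 0 < eps ->
  exists p, strictly_between a b p /\ I p /\ Rabs (g p - g a) < eps.
Proof.
  intros Hg Ia Ib Hab He.
  destruct (Hg eps He) as [d [Hd Hgd]].
  destruct (strictly_between_near a b d Hab Hd) as [p [Hp Hpd]].
  assert (Ip : I p) by (apply (strictly_between_in a b); auto).
  exists p. auto.
Qed.

End Interval.

Lemma iter_fixed (F : R -> R) x k : F x = x -> Nat.iter k F x = x.
Proof. intros Hx; induction k; simpl; auto. rewrite IHk; auto. Qed.

Definition covering_loop (F : R -> R) (L n : nat) (t1 t2 p u : R) : Prop :=
  strictly_between (Nat.iter L F t1) (Nat.iter L F t2) p /\
  strictly_between (Nat.iter L F t1) (Nat.iter L F t2) u /\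
  strictly_between (Nat.iter n F p) (Nat.iter n F u) t1 /\
  strictly_between (Nat.iter n F p) (Nat.iter n F u) t2.

Lemma U_left_right_preimage I (F : R -> R) x0 w A :
  U_right I F x0 w -> U_left I F x0 w -> A <> x0 ->
  exists (n : nat) u, I u /\ strictly_between x0 A u /\ Nat.iter n F u = w.
Proof.
  intros Hr Hl HA. destruct (Rlt_or_le x0 A) as [Hlt | Hle].
  - destruct (Hr (A - x0)) as [n [u [Iu [Hu Hn]]]]; [lra |].
    exists n, u. repeat split; auto; solve_between.
  - destruct (Hl (x0 - A)) as [n [u [Iu [Hu Hn]]]]; [lra |].
    exists n, u. repeat split; auto; solve_between.
Qed.

Section Iterates.

Variables (I : R -> Prop) (F : R -> R).
Hypothesis HI : is_interval I.
Hypothesis HF_in : forall t, I t -> I (F t).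
Hypothesis HF_cont : forall t, I t -> continuous_within I F t.

Lemma iter_in k t : I t -> I (Nat.iter k F t).
Proof. revert t; induction k; intros t It; simpl; auto. Qed.

Lemma iter_continuous k t : I t -> continuous_within I (Nat.iter k F) t.
Proof.
  revert t; induction k; intros t It eps He; simpl.
  - exists eps. auto.
  - destruct (HF_cont _ (iter_in k t It) eps He) as [d1 [Hd1 H1]].
    destruct (IHk t It d1 Hd1) as [d2 [Hd2 H2]].
    exists d2. split; auto. intros y Iy Hy. apply H1; auto using iter_in.
Qed.

Lemma iter_not_constant k :
  not_constant_on_any_interval I F -> not_constant_on_any_interval I (Nat.iter k F).
Proof.
  intros HF. induction k as [| k IHk]; intros a b Hab Hin.
  - exists a, b. simpl. repeat split; lra.
  - destruct (HF a b Hab Hin) as [x1 [x2 [H1 [H2 Hne]]]].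
    assert (Ix1 : I x1) by auto. assert (Ix2 : I x2) by auto.
    destruct (IHk (Rmin (F x1) (F x2)) (Rmax (F x1) (F x2))) as [y1 [y2 [Hy1 [Hy2 Hne']]]].
    + solve_between.
    + intros x Hx. apply (between_in I HI (F x1) (F x2)); auto.
    + destruct (continuous_within_IVT I HI F HF_cont x1 x2 y1 Ix1 Ix2 Hy1) as [v1 [Hv1 E1]].
      destruct (continuous_within_IVT I HI F HF_cont x1 x2 y2 Ix1 Ix2 Hy2) as [v2 [Hv2 E2]].
      exists v1, v2. rewrite !Nat.iter_succ_r, E1, E2.
      repeat split; auto; solve_between.
Qed.

Lemma covering_loop_fixed_point L n t1 t2 p u :
  I t1 -> I t2 -> covering_loop F L n t1 t2 p u ->
  exists s, between t1 t2 s /\ Nat.iter (n + L) F s = s.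
Proof.
  intros It1 It2 [Hp [Hu [Ht1 Ht2]]].
  destruct (continuous_within_IVT I HI (Nat.iter L F) (iter_continuous L) t1 t2 p It1 It2
              (strictly_between_between _ _ _ Hp)) as [a [Ha Ea]].
  destruct (continuous_within_IVT I HI (Nat.iter L F) (iter_continuous L) t1 t2 u It1 It2
              (strictly_between_between _ _ _ Hu)) as [b [Hb Eb]].
  assert (Ia : I a) by (apply (between_in I HI t1 t2); auto).
  assert (Ib : I b) by (apply (between_in I HI t1 t2); auto).
  set (G := fun x => Nat.iter (n + L) F x - x).
  assert (HG : forall t, I t -> continuous_within I G t).
  { intros t It. apply continuous_within_minus;
      [apply iter_continuous; auto | apply continuous_within_id]. }
  assert (Ga : G a = Nat.iter n F p - a) by (unfold G; rewrite Nat.iter_add, Ea; auto).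
  assert (Gb : G b = Nat.iter n F u - b) by (unfold G; rewrite Nat.iter_add, Eb; auto).
  destruct (continuous_within_IVT I HI G HG a b 0 Ia Ib) as [s [Hs Es]].
  { rewrite Ga, Gb. apply (displacements_opposite _ _ t1 t2); auto. }
  exists s. split.
  - clear - Ha Hb Hs. solve_between.
  - unfold G in Es. lra.
Qed.

Lemma periodic_chain_recurrent s N :
  I s -> (0 < N)%nat -> Nat.iter N F s = s -> chain_recurrent I F s.
Proof.
  intros Is HN Hs. split; auto. intros eps He.
  exists N, (fun k => Nat.iter k F s). repeat split; auto using iter_in.
  intros k Hk. destruct k as [| k]; [lia |].
  replace (S k - 1)%nat with k by lia. simpl.
  rewrite Rminus_diag, Rabs_R0. exact He.
Qed.

Lemma covering_loop_near_homoclinic_point x0 w L delta :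
  not_constant_on_any_interval I F -> I x0 -> F x0 = x0 ->
  I w -> w <> x0 -> Nat.iter L F w = x0 ->
  U_right I F x0 w -> U_left I F x0 w -> 0 < delta ->
  exists (n : nat) t1 t2 p u, I t1 /\ I t2 /\ I p /\ I u /\
    Rabs (t1 - w) < delta /\ Rabs (t2 - w) < delta /\ covering_loop F L n t1 t2 p u.
Proof.
  intros Hnc Ix0 Hx0 Iw Hwx0 HwL Hr Hl Hdelta.
  destruct (not_constant_near_point I HI (Nat.iter L F) w x0 delta (iter_not_constant L Hnc)
              Iw Ix0 Hwx0 Hdelta) as [t1 [St1 [It1 [Ht1d HA1]]]].
  rewrite HwL in HA1.
  assert (Ht1w : t1 <> w) by (intros ->; auto).
  set (A1 := Nat.iter L F t1) in *.
  destruct (U_left_right_preimage I F x0 w A1 Hr Hl HA1) as [n [u [Iu [Su Hun]]]].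
  assert (Ht1x0 : 0 < Rabs (t1 - x0))
    by (apply Rabs_pos_lt; destruct (strictly_between_neq _ _ _ St1); lra).
  destruct (continuous_within_near_point I HI (Nat.iter n F) x0 u _
              (iter_continuous n x0 Ix0) Ix0 Iu
              (not_eq_sym (proj1 (strictly_between_neq _ _ _ Su))) Ht1x0)
    as [p [Sp [Ip HB]]].
  rewrite (iter_fixed F x0 n Hx0) in HB.
  assert (Hpx0 : 0 < Rabs (p - x0))
    by (apply Rabs_pos_lt; destruct (strictly_between_neq _ _ _ Sp); lra).
  destruct (continuous_within_near_point I HI (Nat.iter L F) w t1 _
              (iter_continuous L w Iw) Iw It1 (not_eq_sym Ht1w) Hpx0)
    as [t2 [St2 [It2 HA2]]].
  rewrite HwL in HA2.
  set (A2 := Nat.iter L F t2) in *. set (B := Nat.iter n F p) in *.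
  assert (Hp_cov : strictly_between A1 A2 p).
  { apply strictly_between_sym, (strictly_between_move_endpoint x0); auto.
    apply strictly_between_sym, (strictly_between_trans _ _ u);
      apply strictly_between_sym; auto. }
  assert (Hu_cov : strictly_between A1 A2 u).
  { apply strictly_between_sym, (strictly_between_move_endpoint x0); auto.
    pose proof (strictly_between_dist _ _ _ Sp). lra. }
  assert (Ht1_cov : strictly_between B w t1).
  { apply (strictly_between_move_endpoint x0); auto using strictly_between_sym. }
  assert (Ht2_cov : strictly_between B w t2).
  { apply (strictly_between_trans _ _ t1); auto using strictly_between_sym. }
  assert (Ht2d : Rabs (t2 - w) < delta) by (pose proof (strictly_between_dist _ _ _ St2); lra).
  rewrite <- Hun in Ht1_cov, Ht2_cov.
  exists n, t1, t2, p, u. unfold covering_loop. tauto.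
Qed.

End Iterates.

Definition eventually_near (J : R -> Prop) (l0 : R) (P : R -> Prop) : Prop :=
  exists g, 0 < g /\ forall m, J m -> Rabs (m - l0) < g -> P m.

Lemma eventually_near_and J l0 (P Q : R -> Prop) :
  eventually_near J l0 P -> eventually_near J l0 Q ->
  eventually_near J l0 (fun m => P m /\ Q m).
Proof.
  intros [g1 [Hg1 HP]] [g2 [Hg2 HQ]].
  exists (Rmin g1 g2). split; [apply Rmin_glb_lt; lra |].
  intros m Jm Hm. apply Rmin_Rgt in Hm as [Hm1 Hm2]. auto.
Qed.

Lemma eventually_near_both_sides J l0 (P : R -> Prop) e :
  0 < e -> (forall l, Rabs (l - l0) < e -> J l) -> eventually_near J l0 P ->
  forall eps, 0 < eps ->
  (exists m, J m /\ l0 < m < l0 + eps /\ P m) /\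
  (exists m, J m /\ l0 - eps < m < l0 /\ P m).
Proof.
  intros He HJ [g [Hg HP]] eps Heps.
  set (h := Rmin eps (Rmin g e) / 2).
  assert (Hh : 0 < h /\ h < eps /\ h < g /\ h < e).
  { pose proof (Rmin_l eps (Rmin g e)). pose proof (Rmin_r eps (Rmin g e)).
    pose proof (Rmin_l g e). pose proof (Rmin_r g e).
    assert (0 < Rmin eps (Rmin g e)) by (repeat apply Rmin_glb_lt; lra).
    unfold h. lra. }
  assert (Hdist : forall m, Rabs (m - l0) = h -> J m /\ P m).
  { intros m Hm. assert (J m) by (apply HJ; lra). split; auto. apply HP; auto; lra. }
  assert (Hright : Rabs (l0 + h - l0) = h)
    by (replace (l0 + h - l0) with h by ring; apply Rabs_pos_eq; lra).
  assert (Hleft : Rabs (l0 - h - l0) = h)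
    by (replace (l0 - h - l0) with (- h) by ring; rewrite Rabs_Ropp; apply Rabs_pos_eq; lra).
  split; [exists (l0 + h); destruct (Hdist _ Hright) | exists (l0 - h); destruct (Hdist _ Hleft)];
    repeat split; auto; lra.
Qed.

Lemma strictly_between_eventually J l0 (a b : R -> R) x :
  continuous_within J a l0 -> continuous_within J b l0 ->
  strictly_between (a l0) (b l0) x ->
  eventually_near J l0 (fun m => strictly_between (a m) (b m) x).
Proof.
  intros Ha Hb Hx. destruct (strictly_between_neq _ _ _ Hx) as [Hxa Hxb].
  destruct (Ha (Rabs (x - a l0))) as [d1 [Hd1 H1]]; [apply Rabs_pos_lt; lra |].
  destruct (Hb (Rabs (x - b l0))) as [d2 [Hd2 H2]]; [apply Rabs_pos_lt; lra |].
  exists (Rmin d1 d2). split; [apply Rmin_glb_lt; lra |].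
  intros m Jm Hm. apply Rmin_Rgt in Hm as [Hm1 Hm2].
  apply strictly_between_sym, (strictly_between_move_endpoint (b l0)); auto.
  apply strictly_between_sym, (strictly_between_move_endpoint (a l0)); auto.
Qed.

Lemma homoclinic_orbit_iter I (g : R -> R) x0 z :
  homoclinic_orbit I g x0 z -> forall k, Nat.iter k g (z k) = x0.
Proof.
  intros [Hz0 [_ [_ [Hzs _]]]] k. induction k as [| k IHk]; [exact Hz0 |].
  rewrite Nat.iter_succ_r, Hzs. exact IHk.
Qed.

Lemma homoclinic_tangency_pt_preimage I (g g' : R -> R) x0 w :
  homoclinic_tangency_pt I g g' x0 w -> g' x0 <> 0 ->
  I w /\ w <> x0 /\ exists L : nat, (0 < L)%nat /\ Nat.iter L g w = x0.
Proof.
  intros [z [L [Horbit [HzL Hcrit]]]] Hx0.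
  assert (HwL : Nat.iter L g w = x0) by (rewrite <- HzL; apply (homoclinic_orbit_iter I); auto).
  assert (Hwx0 : w <> x0) by (intros ->; auto).
  split; [rewrite <- HzL; apply Horbit |]. split; auto.
  exists L. split; auto. destruct L; [simpl in HwL; congruence | lia].
Qed.

Section Family.

Variables (I J : R -> Prop) (f : R -> R -> R) (l0 : R).
Hypothesis HI : is_interval I.
Hypothesis Hmap : forall x l, I x -> J l -> I (f x l).
Hypothesis Hcont : forall l, J l -> forall x, I x -> continuous_within I (fun v => f v l) x.
Hypothesis Hjoint : forall x, I x -> continuous2_within I J f x l0.
Hypothesis Jl0 : J l0.

Lemma iter_continuous_in_parameter k t :
  I t -> continuous_within J (fun m => Nat.iter k (fun v => f v m) t) l0.
Proof.
  intros It. induction k as [| k IHk]; intros eps Heps; simpl.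
  - exists 1. split; [lra |]. intros. rewrite Rminus_diag, Rabs_R0. exact Heps.
  - assert (Ik : I (Nat.iter k (fun v => f v l0) t)) by (apply iter_in; auto).
    destruct (Hjoint _ Ik eps Heps) as [d1 [Hd1 H1]].
    destruct (IHk d1 Hd1) as [d2 [Hd2 H2]].
    exists (Rmin d1 d2). split; [apply Rmin_glb_lt; lra |].
    intros m Jm Hm. apply Rmin_Rgt in Hm as [Hm1 Hm2].
    apply H1; auto. apply iter_in; auto.
Qed.

Lemma covering_loop_eventually_chain_recurrent L n t1 t2 p u :
  (0 < L)%nat -> I t1 -> I t2 -> I p -> I u ->
  covering_loop (fun v => f v l0) L n t1 t2 p u ->
  eventually_near J l0 (fun m =>
    exists s, between t1 t2 s /\ chain_recurrent I (fun v => f v m) s).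
Proof.
  intros HL It1 It2 Ip Iu Hloop0.
  assert (Hloop : eventually_near J l0 (fun m => covering_loop (fun v => f v m) L n t1 t2 p u)).
  { destruct Hloop0 as [Hp [Hu [Ht1 Ht2]]]. unfold covering_loop.
    apply eventually_near_and; [| apply eventually_near_and; [| apply eventually_near_and]];
      apply strictly_between_eventually; auto using iter_continuous_in_parameter. }
  destruct Hloop as [g [Hg Hloop]]. exists g. split; auto. intros m Jm Hm.
  destruct (covering_loop_fixed_point I (fun v => f v m) HI (fun x Ix => Hmap x m Ix Jm)
              (Hcont m Jm) L n t1 t2 p u It1 It2 (Hloop m Jm Hm)) as [s [Hs Hper]].
  exists s. split; auto.
  apply (periodic_chain_recurrent I _ (fun x Ix => Hmap x m Ix Jm) s (n + L));
    [apply (between_in I HI t1 t2) | lia |]; auto.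
Qed.

End Family.

Theorem mainTheorem5
  (I J : R -> Prop) (f fx fxx fl : R -> R -> R) (l0 : R) (xs : R -> R) (y w : R)
  (HI : is_interval I) (HIn : nondegenerate I)
  (HJ : is_interval J) (HJn : nondegenerate J)
  (Hl0 : exists e, 0 < e /\ forall l, Rabs (l - l0) < e -> J l)
  (Hmap : forall x l, I x -> J l -> I (f x l))
  (H1 : C1_family_of_C2_maps I J f fx fxx fl)
  (H2 : not_constant_on_any_interval I (fun x => f x l0))
  (H3 : H3_condition I J f fx l0)
  (H4 : forall l, J l -> repelling_fixed_pt I (fun x => f x l) (fun x => fx x l) (xs l))
  (H4y : homoclinic_pt I (fun x => f x l0) (xs l0) y)
  (H5 : forall z : nat -> R, homoclinic_orbit I (fun x => f x l0) (xs l0) z ->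
          (exists K : nat, z K = y) ->
          exists c, fx c l0 = 0 /\ (exists k : nat, z k = c) /\
            forall c', fx c' l0 = 0 -> (exists k : nat, z k = c') -> c' = c)
  (H6 : homoclinic_tangency_pt I (fun x => f x l0) (fun x => fx x l0) (xs l0) w)
  (Hpos : 0 < fx (xs l0) l0)
  (Hw : U_right I (fun x => f x l0) (xs l0) w /\ U_left I (fun x => f x l0) (xs l0) w) :
  ~ chain_explosion_point I J f l0 w.
Proof.
  intros [_ [delta [eps [Hdelta [Heps Hexplosion]]]]].
  destruct Hl0 as [e [He HJ_l0]].
  assert (Jl0 : J l0) by (apply HJ_l0; rewrite Rminus_diag, Rabs_R0; lra).
  destruct (H4 l0 Jl0) as [Ix0 [Hx0 _]].
  destruct (homoclinic_tangency_pt_preimage I _ _ _ w H6 ltac:(simpl; lra))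
    as [Iw [Hwx0 [L [HL HwL]]]].
  pose proof (C1_family_continuous I J f fx fxx fl H1) as Hcont.
  destruct (covering_loop_near_homoclinic_point I (fun v => f v l0) HI
              (fun x Ix => Hmap x l0 Ix Jl0) (Hcont l0 Jl0) (xs l0) w L delta
              H2 Ix0 Hx0 Iw Hwx0 HwL (proj1 Hw) (proj2 Hw) Hdelta)
    as [n [t1 [t2 [p [u [It1 [It2 [Ip [Iu [Ht1 [Ht2 Hloop]]]]]]]]]]].
  pose proof (covering_loop_eventually_chain_recurrent I J f l0 HI Hmap Hcont
                (C1_family_continuous2 I J f fx fxx fl l0 e H1 He HJ_l0) Jl0
                L n t1 t2 p u HL It1 It2 Ip Iu Hloop) as Hnear.
  destruct (eventually_near_both_sides J l0 _ e He HJ_l0 Hnear eps Heps)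
    as [[m [Jm [Hm [s [Hs Hcr]]]]] [m' [Jm' [Hm' [s' [Hs' Hcr']]]]]].
  destruct Hexplosion as [Hright | Hleft].
  - exact (Hright m Jm Hm s (between_ball t1 t2 s w delta Hs Ht1 Ht2) Hcr).
  - exact (Hleft m' Jm' Hm' s' (between_ball t1 t2 s' w delta Hs' Ht1 Ht2) Hcr').
Qed.
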